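(* Let $(X,f,q_X)$ and $(Y,g,q_Y)$ be partially observable systems and suppose there is a morphism $(m,n):(X,f,q_X)\to(Y,g,q_Y)$ in $\mathbf{PSys}$. Then $\tilde h(X,f,q_X)\geq \tilde h(Y,g,q_Y)$. Equivalently, the assignment $(X,f,q)\mapsto \tilde h(X,f,q)$ defines a functor from $\mathbf{PSys}$ to the ordered set $([0,\infty],\geq)$ viewed as a thin category.
   Context: A dynamical system is a pair $(X,f)$ with $X$ a compact Hausdorff space and $f:X\to X$ a continuous surjection. A partially observable system is a triple $(X,f,q_X)$ where $(X,f)$ is a dynamical system and $q_X:X\to\tilde X$ is a continuous surjection onto a compact Hausdorff space $\tilde X$. A morphism $(X,f,q_X)\to(Y,g,q_Y)$ in the category $\mathbf{PSys}$ is a pair $(m,n)$ of continuous surjections $m:X\to Y$, $n:\tilde X\to\tilde Y$ with $m\circ f=g\circ m$ and $n\circ q_X=q_Y\circ m$. For a sequence of positive numbers $x_t$, $\mathrm{GR}_t(x_t)=\limsup_{t\to\infty}\frac1t\ln x_t$. For an open cover $\mathcal C$, $\#\mathcal C$ is the minimal cardinality of a finite subcover, and $\mathcal A\vee\mathcal B=\{A\cap B\}_{A\in\mathcal A,B\in\mathcal B}$. The quotient-topological entropy is $\tilde h(X,f,q)=\sup\{\mathrm{GR}_n(\#\bigvee_{i=0}^n f^{-i}(q^{-1}\mathcal U)) : \mathcal U \text{ an open cover of } \tilde X\}$, i.e. the supremum over open covers of $X$ in the topology induced by $q$. *)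

From HB Require Import structures.
From mathcomp Require Import all_boot all_order all_algebra.
From mathcomp Require Import all_classical all_reals all_analysis.
Set Implicit Arguments. Unset Strict Implicit. Unset Printing Implicit Defensive.
Import Order.TTheory GRing.Theory Num.Theory.
Local Open Scope classical_set_scope.
Local Open Scope ring_scope.

Definition dyn_system (X : topologicalType) (f : X -> X) : Prop :=
  compact [set: X] /\ hausdorff_space X /\ continuous f /\
  (forall y : X, exists x, f x = y).

Definition pobs_system (X Xt : topologicalType) (f : X -> X) (q : X -> Xt) : Prop :=
  dyn_system f /\ compact [set: Xt] /\ hausdorff_space Xt /\ continuous q /\
  (forall y : Xt, exists x, q x = y).

Definition psys_morphism (X Xt Y Yt : topologicalType) (f : X -> X) (qX : X -> Xt)
  (g : Y -> Y) (qY : Y -> Yt) (m : X -> Y) (n : Xt -> Yt) : Prop :=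
  continuous m /\ (forall y : Y, exists x, m x = y) /\
  continuous n /\ (forall y : Yt, exists x, n x = y) /\
  (forall x, m (f x) = g (m x)) /\ (forall x, n (qX x) = qY (m x)).

Definition open_cover (T : topologicalType) (U : set (set T)) : Prop :=
  (forall B, U B -> open B) /\ \bigcup_(B in U) B = [set: T].

Definition pull_cover (T S : Type) (h : T -> S) (U : set (set S)) : set (set T) :=
  [set h @^-1` B | B in U].

Definition join_cover (T : Type) (A B : set (set T)) : set (set T) :=
  [set a `&` b | a in A & b in B].

Fixpoint dyn_join (X Xt : Type) (f : X -> X) (q : X -> Xt) (U : set (set Xt)) (n : nat)
  : set (set X) :=
  match n with
  | 0 => pull_cover q U
  | k.+1 => join_cover (dyn_join f q U k) (pull_cover (q \o iter k.+1 f) U)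
  end.

Definition cover_num (R : realType) (T : Type) (C : set (set T)) : \bar R :=
  ereal_inf [set (n%:R)%:E | n in
    [set n : nat | exists s : seq (set T), size s = n /\
       (forall B, B \in s -> C B) /\ \bigcup_(B in [set B | B \in s]) B = [set: T]]].

Definition growth_rate (R : realType) (x : nat -> R) : \bar R :=
  limn_esup (fun t : nat => ((ln (x t)) / t%:R)%:E).

Definition qt_entropy (R : realType) (X Xt : topologicalType) (f : X -> X) (q : X -> Xt)
  : \bar R :=
  ereal_sup [set growth_rate (fun n => fine (cover_num R (dyn_join f q U n)))
             | U in [set U : set (set Xt) | open_cover U]].

From mathcomp Require Import all_boot all_order all_algebra.
From mathcomp Require Import all_classical all_reals all_analysis.
Set Implicit Arguments. Unset Strict Implicit. Unset Printing Implicit Defensive.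
Local Open Scope classical_set_scope.
Local Open Scope ereal_scope.

(* Pull an open cover U of Yt back along n.  Since n \o qX = qY \o m and m
   semiconjugates f to g, the dynamical joins of n^-1 U for (f, qX) are the
   m-preimages of those of U for (g, qY).  As m is onto, taking preimages under
   m is a size-preserving bijection between finite subcovers, so both joins have
   the same cover numbers and hence the same growth rate: every growth rate in
   the supremum defining the entropy of Y also occurs in that of X. *)

Lemma iter_semiconj (X Y : Type) (f : X -> X) (g : Y -> Y) (m : X -> Y) :
  (forall x, m (f x) = g (m x)) -> forall k x, m (iter k f x) = iter k g (m x).
Proof. by move=> mfg; elim=> [|k IHk] x //=; rewrite mfg IHk. Qed.

Lemma pull_cover_comp (T S U : Type) (h : T -> S) (k : S -> U) (C : set (set U)) :
  pull_cover h (pull_cover k C) = pull_cover (k \o h) C.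
Proof. by rewrite /pull_cover image_comp. Qed.

Lemma pull_cover_join (T S : Type) (h : T -> S) (A B : set (set S)) :
  join_cover (pull_cover h A) (pull_cover h B) = pull_cover h (join_cover A B).
Proof.
apply/seteqP; split=> D.
- move=> [a' [a Aa <-] [b' [b Bb <-] <-]].
  by exists (a `&` b); [exists a => //; exists b | rewrite preimage_setI].
- move=> [ab [a Aa [b Bb <-]] <-].
  by exists (h @^-1` a); [exists a | exists (h @^-1` b); [exists b | rewrite preimage_setI]].
Qed.

Lemma bigcup_pull_cover (T S : Type) (h : T -> S) (C : set (set S)) :
  \bigcup_(B in pull_cover h C) B = h @^-1` \bigcup_(B in C) B.
Proof. by rewrite bigcup_image preimage_bigcup. Qed.

Lemma open_cover_pull (T S : topologicalType) (h : T -> S) (C : set (set S)) :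
  continuous h -> open_cover C -> open_cover (pull_cover h C).
Proof.
move=> hcont [Copen Ccov]; split; last by rewrite bigcup_pull_cover Ccov preimage_setT.
by move=> _ [B CB <-]; apply: open_comp => [x _|]; [exact: hcont | exact: Copen].
Qed.

Section DynJoin.

Variables (X Xt : Type) (f : X -> X) (q : X -> Xt).

Lemma dyn_join_pull_obs (Yt : Type) (n : Xt -> Yt) (U : set (set Yt)) k :
  dyn_join f q (pull_cover n U) k = dyn_join f (n \o q) U k.
Proof. by elim: k => [|k /= ->]; rewrite /= pull_cover_comp. Qed.

Lemma dyn_join_semiconj (Y : Type) (g : Y -> Y) (m : Y -> X) (U : set (set Xt)) :
  (forall y, m (g y) = f (m y)) ->
  forall k, dyn_join g (q \o m) U k = pull_cover m (dyn_join f q U k).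
Proof.
move=> mgf; elim=> [|k /= ->]; first by rewrite /= pull_cover_comp.
have -> : q \o m \o iter k.+1 g = (q \o iter k.+1 f) \o m.
  by apply/funext => y; exact: (congr1 q (iter_semiconj mgf k.+1 y)).
by rewrite -pull_cover_comp pull_cover_join.
Qed.

End DynJoin.

Definition finite_subcover (T : Type) (C : set (set T)) (s : seq (set T)) :=
  (forall B, B \in s -> C B) /\ \bigcup_(B in [set B | B \in s]) B = [set: T].

Lemma cover_numE (R : realType) (T : Type) (C : set (set T)) :
  cover_num R C = ereal_inf [set (size s)%:R%:E | s in finite_subcover C].
Proof.
rewrite /cover_num; congr ereal_inf; apply/seteqP; split=> x.
- by move=> [k [s [<- sC]] <-]; exists s.
- by move=> [s sC <-]; exists (size s) => //; exists s.
Qed.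

Lemma map_lift (T U : eqType) (P : U -> Prop) (h : U -> T) (s : seq T) :
  (forall x, x \in s -> exists2 y, P y & h y = x) ->
  exists2 t, (forall y, y \in t -> P y) & map h t = s.
Proof.
elim: s => [|x s IHs] hs; first by exists [::].
have [|t tP <-] := IHs; first by move=> z zs; apply: hs; rewrite in_cons zs orbT.
have [y Py <-] := hs x (mem_head _ _).
by exists (y :: t) => // z; rewrite in_cons => /predU1P [->|/tP].
Qed.

Section OntoPreimage.

Variables (X Y : Type) (m : X -> Y).
Hypothesis m_onto : forall y, exists x, m x = y.

Lemma preimage_onto_inj : injective (@preimage X Y m).
Proof.
move=> A B AB; apply/funext => y; have [x <-] := m_onto y.
exact: (congr1 (fun S => S x) AB).
Qed.

Lemma finite_subcover_pull (C : set (set Y)) (t : seq (set Y)) :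
  finite_subcover (pull_cover m C) (map (preimage m) t) <-> finite_subcover C t.
Proof.
have cupE : \bigcup_(B in [set B | B \in map (preimage m) t]) B =
            m @^-1` \bigcup_(B in [set B | B \in t]) B.
  apply/seteqP; split=> x /=.
  - by move=> [_ /mapP [B tB ->] Bx]; exists B.
  - by move=> [B tB Bx]; exists (m @^-1` B) => //; exact: map_f.
rewrite /finite_subcover cupE; split=> [[tC cov]|[tC cov]].
  split; last by apply: preimage_onto_inj; rewrite preimage_setT.
  by move=> B tB; have [B' + /preimage_onto_inj <-] := tC _ (map_f (preimage m) tB).
split; last by rewrite cov preimage_setT.
by move=> _ /mapP [B tB ->]; exists B; first exact: tC.
Qed.

Lemma cover_num_pull (R : realType) (C : set (set Y)) :
  cover_num R (pull_cover m C) = cover_num R C.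
Proof.
rewrite !cover_numE; congr ereal_inf; apply/seteqP; split=> _ [s sC <-].
- have [t tC ts] := map_lift (P := C) (h := preimage m) (proj1 sC).
  by exists t; [apply/finite_subcover_pull; rewrite ts | rewrite -ts size_map].
- by exists (map (preimage m) s); rewrite ?size_map //; apply/finite_subcover_pull.
Qed.

End OntoPreimage.

Theorem mainTheorem1 (R : realType) (X Xt Y Yt : topologicalType)
  (f : X -> X) (qX : X -> Xt) (g : Y -> Y) (qY : Y -> Yt)
  (m : X -> Y) (n : Xt -> Yt) :
  pobs_system f qX -> pobs_system g qY ->
  psys_morphism f qX g qY m n ->
  qt_entropy R g qY <= qt_entropy R f qX.
Proof.
move=> _ _ [_ [m_onto [n_cont [_ [mfg nq]]]]].
have nqE : n \o qX = qY \o m by apply/funext => x; exact: nq.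
apply: ereal_sup_le => _ [U Ucover <-].
exists (pull_cover n U); first exact: open_cover_pull.
congr growth_rate; apply/funext => k.
by rewrite dyn_join_pull_obs nqE (dyn_join_semiconj qY U mfg) (cover_num_pull m_onto).
Qed.
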